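(* Let $f\colon X\to X$ be a homeomorphism of a compact metric space with the L-shadowing property and let $C$ be a chain recurrent class of $f$. Then there exist $n\ge1$ and pairwise disjoint compact sets $C_1,\dots,C_n\subset C$, each $f^n$-invariant, such that $C=\bigcup_{i=1}^n C_i$, $f(C_i)=C_{(i+1)\bmod n}$, and for each $i$ the restriction $f^n|_{C_i}$ is topologically mixing and has the two-sided limit shadowing property.
   Context: L-shadowing: for every $\varepsilon>0$ there is $\delta>0$ such that every sequence $(x_k)_{k\in\mathbb{Z}}$ with $d(f(x_k),x_{k+1})\le\delta$ for all $k$ and $d(f(x_k),x_{k+1})\to0$ as $|k|\to\infty$ admits $z$ with $d(f^k(z),x_k)\le\varepsilon$ for all $k$ and $d(f^k(z),x_k)\to0$ as $|k|\to\infty$. A $\varepsilon$-pseudo orbit is a sequence with $d(f(x_k),x_{k+1})<\varepsilon$; the chain recurrent class of $x$ is the set of $y$ such that for every $\varepsilon>0$ there is a periodic $\varepsilon$-pseudo orbit containing $x$ and $y$. A homeomorphism $g$ of a compact metric space $Y$ has the two-sided limit shadowing property if for every sequence $(y_k)_{k\in\mathbb{Z}}$ with $d(g(y_k),y_{k+1})\to0$ as $|k|\to\infty$ there is $y\in Y$ with $d(g^k(y),y_k)\to0$ as $|k|\to\infty$. Topologically mixing: for all nonempty open $U,V$ there is $N$ with $g^k(U)\cap V\ne\emptyset$ for all $k\ge N$. *)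

From Stdlib Require Export Reals ZArith.
Open Scope R_scope.

Section MetricDefs.
Context {X : Type} (d : X -> X -> R).

Definition is_metric : Prop :=
  (forall x y, 0 <= d x y) /\
  (forall x y, d x y = 0 <-> x = y) /\
  (forall x y, d x y = d y x) /\
  (forall x y z, d x z <= d x y + d y z).

Definition open_set (U : X -> Prop) : Prop :=
  forall x, U x -> exists eps, 0 < eps /\ forall y, d x y < eps -> U y.

Definition compact_set (K : X -> Prop) : Prop :=
  forall (I : Type) (U : I -> X -> Prop),
    (forall i, open_set (U i)) ->
    (forall x, K x -> exists i, U i x) ->
    exists l : list I, forall x, K x -> exists i, List.In i l /\ U i x.

Definition compact_space : Prop := compact_set (fun _ => True).

Definition continuous (f : X -> X) : Prop :=
  forall x eps, 0 < eps -> exists delta, 0 < delta /\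
    forall y, d x y < delta -> d (f x) (f y) < eps.

Definition homeomorphism (f g : X -> X) : Prop :=
  continuous f /\ continuous g /\
  (forall x, g (f x) = x) /\ (forall x, f (g x) = x).

Definition zpow (f g : X -> X) (k : Z) : X -> X :=
  match k with
  | Z0 => fun x => x
  | Zpos p => Nat.iter (Pos.to_nat p) f
  | Zneg p => Nat.iter (Pos.to_nat p) g
  end.

Definition tends0_Z (u : Z -> R) : Prop :=
  forall eps, 0 < eps -> exists N : Z,
    forall k : Z, (N <= Z.abs k)%Z -> Rabs (u k) <= eps.

Definition L_shadowing (f g : X -> X) : Prop :=
  forall eps, 0 < eps -> exists delta, 0 < delta /\
    forall xs : Z -> X,
      (forall k, d (f (xs k)) (xs (k + 1)%Z) <= delta) ->
      tends0_Z (fun k => d (f (xs k)) (xs (k + 1)%Z)) ->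
      exists z, (forall k, d (zpow f g k z) (xs k) <= eps) /\
                tends0_Z (fun k => d (zpow f g k z) (xs k)).

Definition periodic_pseudo_orbit_through (f : X -> X) (eps : R) (x y : X) : Prop :=
  exists (m : nat) (p : nat -> X),
    (1 <= m)%nat /\
    (forall k, p (k + m)%nat = p k) /\
    (forall k, d (f (p k)) (p (S k)) < eps) /\
    (exists i, p i = x) /\ (exists j, p j = y).

Definition chain_recurrent_class (f : X -> X) (x : X) : X -> Prop :=
  fun y => forall eps, 0 < eps -> periodic_pseudo_orbit_through f eps x y.

Definition image (f : X -> X) (A : X -> Prop) : X -> Prop :=
  fun y => exists x, A x /\ f x = y.

Definition rel_open (K U : X -> Prop) : Prop :=
  (forall x, U x -> K x) /\
  forall x, U x -> exists eps, 0 < eps /\ forall y, K y -> d x y < eps -> U y.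

Definition top_mixing_on (F : X -> X) (K : X -> Prop) : Prop :=
  forall U V : X -> Prop, rel_open K U -> rel_open K V ->
    (exists u, U u) -> (exists v, V v) ->
    exists N : nat, forall k, (N <= k)%nat ->
      exists x, U x /\ V (Nat.iter k F x).

Definition two_sided_limit_shadowing_on (F G : X -> X) (K : X -> Prop) : Prop :=
  forall ys : Z -> X, (forall k, K (ys k)) ->
    tends0_Z (fun k => d (F (ys k)) (ys (k + 1)%Z)) ->
    exists y, K y /\ tends0_Z (fun k => d (zpow F G k y) (ys k)).

End MetricDefs.

(* Fix x0 in the class and a scale d0 at which every d0-limit pseudo orbit is
   limit shadowed.  The lengths of d0-chains from x0 back to x0 form a numerical
   semigroup; its period is n.  Shadowing a d0-cycle of length L by a true
   orbit shows that at every finer scale the cycle lengths have a period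
   dividing L, so the period is n at every scale and all large multiples of n
   are cycle lengths at every scale.  The i-th piece consists of the points of
   the class reached from x0 by d0-chains of length i modulo n; the pieces are
   disjoint, closed, and cyclically permuted by f.  Mixing of f^n on a piece
   follows by shadowing long chains between two of its points; limit shadowing
   for f^n follows by spreading an f^n-limit pseudo orbit into one for f,
   splicing a chain into its middle, and shadowing the result. *)

From Stdlib Require Import Reals ZArith Lia Lra Wf_nat List Classical.
Open Scope R_scope.

Local Open Scope nat_scope.

Lemma add_closed_comb (S : nat -> Prop) :
  (forall a b, S a -> S b -> S (a + b)) ->
  forall q x y, S x -> S y -> S (q * y + x).
Proof.
  intros Hadd q. induction q as [|q IH]; intros x y Hx Hy; simpl; auto.
  rewrite <- Nat.add_assoc. apply Hadd; auto.
Qed.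

Lemma nat_least (D : nat -> Prop) :
  (exists m, D m) -> exists P, D P /\ forall p, D p -> P <= p.
Proof.
  intros HD.
  destruct (dec_inh_nat_subset_has_unique_least_element D (fun m => classic (D m)) HD)
    as [P [[DP HP] _]].
  exists P. auto.
Qed.

Lemma semigroup_period (S : nat -> Prop) :
  (forall a b, S a -> S b -> S (a + b)) -> (forall a, S a -> 1 <= a) ->
  (exists a, S a) ->
  exists P, 1 <= P /\ (forall a, S a -> Nat.divide P a) /\
    (exists a b, S a /\ S b /\ a = b + P) /\
    (exists M, forall m, M <= m -> Nat.divide P m -> S m).
Proof.
  intros Hadd Hpos [a0 Ha0].
  set (Gap := fun p => 1 <= p /\ exists a b, S a /\ S b /\ a = b + p).
  destruct (nat_least Gap) as [P [[HP1 [a [b [Ha [Hb Eab]]]]] Hmin]].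
  { exists a0. split; [auto|]. exists (a0 + a0), a0. auto. }
  (* a nonzero remainder modulo P would be a smaller gap *)
  assert (Hdiv : forall c, S c -> Nat.divide P c).
  { intros c Hc. pose proof (Nat.div_mod_eq c P) as Ec.
    pose proof (Nat.mod_upper_bound c P ltac:(lia)) as Hr.
    destruct (Nat.eq_dec (c mod P) 0) as [Er|Er]; [exists (c / P); lia|].
    exfalso. assert (Gr : Gap (c mod P)).
    { split; [lia|]. exists ((c / P) * b + (c + b)), ((c / P) * a + b).
      split; [|split]; [apply add_closed_comb; auto .. | nia]. }
    specialize (Hmin _ Gr). lia. }
  exists P. repeat split; auto; [exists a, b; auto|].
  (* with b = t*P and a = (t+1)*P, every k*P with k >= t*t is x*a + (s-x)*b *)
  destruct (Hdiv b Hb) as [t Et].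
  assert (Ht : 1 <= t) by (pose proof (Hpos b Hb); nia).
  exists (t * t * P). intros m Hm [k Ek].
  pose proof (Nat.div_mod_eq k t) as Ek2.
  pose proof (Nat.mod_upper_bound k t ltac:(lia)) as Hx.
  assert (Hs : t <= k / t) by nia.
  set (s := k / t) in *. set (x := k mod t) in *.
  assert (Es : s = (s - x - 1) + x + 1) by lia.
  set (r := s - x - 1) in *.
  replace m with (x * a + (r * b + b)) by (subst a b; rewrite Ek, Ek2, Es; nia).
  apply add_closed_comb; auto. apply add_closed_comb; auto.
Qed.

Lemma mod_eq_of_divide_add n x y c : n <> 0 ->
  Nat.divide n (x + c) -> Nat.divide n (y + c) -> x mod n = y mod n.
Proof.
  intros Hn [u Hu] [v Hv].
  transitivity ((x + v * n) mod n); [rewrite Nat.Div0.mod_add; auto|].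
  transitivity ((y + u * n) mod n); [f_equal; lia|]. rewrite Nat.Div0.mod_add. auto.
Qed.

Lemma mod_succ_inj n r i : r < n -> i < n -> (r + 1) mod n = (i + 1) mod n -> r = i.
Proof.
  intros Hr Hi H.
  destruct (Nat.eq_dec (r + 1) n) as [E1|E1]; destruct (Nat.eq_dec (i + 1) n) as [E2|E2].
  - lia.
  - rewrite E1, Nat.Div0.mod_same, Nat.mod_small in H by lia. lia.
  - rewrite E2, Nat.Div0.mod_same, Nat.mod_small in H by lia. lia.
  - rewrite !Nat.mod_small in H by lia. lia.
Qed.

Local Open Scope R_scope.

Section Dynamics.
Context {X : Type} (d : X -> X -> R) (f g : X -> X).
Hypothesis Hmetric : is_metric d.
Hypothesis Hhomeo : homeomorphism d f g.

Lemma dist_nonneg x y : 0 <= d x y. Proof. apply Hmetric. Qed.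
Lemma dist_self x : d x x = 0. Proof. apply Hmetric; reflexivity. Qed.
Lemma dist_sym x y : d x y = d y x. Proof. apply Hmetric. Qed.
Lemma dist_triangle x y z : d x z <= d x y + d y z. Proof. apply Hmetric. Qed.
Lemma abs_dist x y : Rabs (d x y) = d x y. Proof. apply Rabs_pos_eq, dist_nonneg. Qed.
Lemma g_f x : g (f x) = x. Proof. apply Hhomeo. Qed.
Lemma f_g x : f (g x) = x. Proof. apply Hhomeo. Qed.
Lemma f_continuous : continuous d f. Proof. apply Hhomeo. Qed.
Lemma g_continuous : continuous d g. Proof. apply Hhomeo. Qed.

Lemma iter_f_g k x : Nat.iter k f (Nat.iter k g x) = x.
Proof.
  induction k as [|k IH]; auto. rewrite (Nat.iter_succ_r k X f).
  change (Nat.iter (S k) g x) with (g (Nat.iter k g x)). rewrite f_g. exact IH.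
Qed.

Lemma iter_iter (h : X -> X) n m x : Nat.iter m (Nat.iter n h) x = Nat.iter (n * m) h x.
Proof.
  induction m as [|m IH]; simpl; [rewrite Nat.mul_0_r; auto|].
  replace (n * S m)%nat with (n + n * m)%nat by lia. rewrite Nat.iter_add, IH. auto.
Qed.

Lemma zpow_of_nat (F G : X -> X) m x : zpow F G (Z.of_nat m) x = Nat.iter m F x.
Proof. destruct m; simpl; auto. rewrite SuccNat2Pos.id_succ. auto. Qed.

Lemma zpow_opp_of_nat (F G : X -> X) m x : zpow F G (- Z.of_nat m) x = Nat.iter m G x.
Proof. destruct m; simpl; auto. rewrite SuccNat2Pos.id_succ. auto. Qed.

Lemma Z_nat_cases (k : Z) : exists m, k = Z.of_nat m \/ k = (- Z.of_nat (S m))%Z.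
Proof.
  destruct (Z_le_gt_dec 0 k).
  - exists (Z.to_nat k). left. lia.
  - exists (Z.to_nat (- k - 1)). right. lia.
Qed.

Lemma f_zpow k x : f (zpow f g k x) = zpow f g (k + 1) x.
Proof.
  destruct (Z_nat_cases k) as [m [-> | ->]].
  - replace (Z.of_nat m + 1)%Z with (Z.of_nat (S m)) by lia.
    rewrite !zpow_of_nat. reflexivity.
  - replace (- Z.of_nat (S m) + 1)%Z with (- Z.of_nat m)%Z by lia.
    rewrite !zpow_opp_of_nat. apply f_g.
Qed.

Lemma iter_zpow m k x : Nat.iter m f (zpow f g k x) = zpow f g (k + Z.of_nat m) x.
Proof.
  induction m as [|m IH]; [simpl; f_equal; lia|].
  change (Nat.iter (S m) f (zpow f g k x)) with (f (Nat.iter m f (zpow f g k x))).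
  rewrite IH, f_zpow. f_equal. lia.
Qed.

Lemma zpow_iter n k x :
  zpow (Nat.iter n f) (Nat.iter n g) k x = zpow f g (Z.of_nat n * k) x.
Proof.
  destruct (Z_nat_cases k) as [m [-> | ->]].
  - rewrite <- Nat2Z.inj_mul, !zpow_of_nat, iter_iter. auto.
  - rewrite Z.mul_opp_r, <- Nat2Z.inj_mul, !zpow_opp_of_nat, iter_iter. auto.
Qed.

Definition chain (e : R) (a b : X) (L : nat) : Prop :=
  exists p : nat -> X, p 0%nat = a /\ p L = b /\
    forall k, (k < L)%nat -> d (f (p k)) (p (S k)) < e.

Lemma chain_one e a b : d (f a) b < e <-> chain e a b 1.
Proof.
  split.
  - intros H. exists (fun k => match k with O => a | _ => b end).
    repeat split; auto. intros k Hk. replace k with 0%nat by lia. auto.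
  - intros [p [P0 [P1 Ps]]]. rewrite <- P0, <- P1. apply Ps. lia.
Qed.

Lemma chain_orbit e a k : 0 < e -> chain e a (Nat.iter k f a) k.
Proof.
  intros He. exists (fun j => Nat.iter j f a). repeat split; auto.
  intros j _. simpl. rewrite dist_self. auto.
Qed.

Lemma chain_mono e e' a b L : e <= e' -> chain e a b L -> chain e' a b L.
Proof.
  intros He [p [P0 [PL Ps]]]. exists p. repeat split; auto.
  intros k Hk. specialize (Ps k Hk). lra.
Qed.

Lemma chain_concat_path e a b c L1 L2 : chain e a b L1 -> chain e b c L2 ->
  exists p : nat -> X, p 0%nat = a /\ p (L1 + L2)%nat = c /\ p L1 = b /\
    forall k, (k < L1 + L2)%nat -> d (f (p k)) (p (S k)) < e.
Proof.
  intros [p1 [P0 [PL Ps]]] [p2 [Q0 [QL Qs]]].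
  exists (fun k => if le_lt_dec k L1 then p1 k else p2 (k - L1)%nat).
  repeat split.
  - destruct (le_lt_dec 0 L1); [auto | lia].
  - destruct (le_lt_dec (L1 + L2) L1).
    + replace L2 with 0%nat in * by lia. rewrite Nat.add_0_r, PL, <- Q0. auto.
    + rewrite <- QL. f_equal. lia.
  - destruct (le_lt_dec L1 L1); [auto | lia].
  - intros k Hk. destruct (le_lt_dec k L1); destruct (le_lt_dec (S k) L1).
    + apply Ps. lia.
    + replace k with L1 by lia. rewrite PL, <- Q0.
      replace (S L1 - L1)%nat with 1%nat by lia. apply Qs. lia.
    + lia.
    + replace (S k - L1)%nat with (S (k - L1)) by lia. apply Qs. lia.
Qed.

Lemma chain_app e a b c L1 L2 : chain e a b L1 -> chain e b c L2 -> chain e a c (L1 + L2).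
Proof.
  intros H1 H2. destruct (chain_concat_path _ _ _ _ _ _ H1 H2) as [p [? [? [_ ?]]]].
  exists p. auto.
Qed.

Lemma chain_split e a b L1 L2 : chain e a b (L1 + L2) ->
  exists c, chain e a c L1 /\ chain e c b L2.
Proof.
  intros [p [P0 [PL Ps]]]. exists (p L1). split.
  - exists p. repeat split; auto. intros k Hk. apply Ps. lia.
  - exists (fun k => p (L1 + k)%nat). repeat split.
    + f_equal. lia.
    + exact PL.
    + intros k Hk. replace (L1 + S k)%nat with (S (L1 + k)) by lia. apply Ps. lia.
Qed.

Lemma chain_perturb_end e e' a y z L : (1 <= L)%nat -> e <= e' ->
  chain e a y L -> d y z < e' - e -> chain e' a z L.
Proof.
  intros HL He C Hyz. replace L with (L - 1 + 1)%nat in C |- * by lia.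
  destruct (chain_split _ _ _ _ _ C) as [c [C1 C2]].
  apply chain_app with c; [apply (chain_mono e); auto|].
  apply chain_one. apply chain_one in C2.
  pose proof (dist_triangle (f c) y z). lra.
Qed.

Lemma chain_perturb_start e e' y w b L : (1 <= L)%nat -> e <= e' ->
  chain e y b L -> d (f w) (f y) < e' - e -> chain e' w b L.
Proof.
  intros HL He C Hwy. replace L with (1 + (L - 1))%nat in C |- * by lia.
  destruct (chain_split _ _ _ _ _ C) as [c [C1 C2]].
  apply chain_app with c; [|apply (chain_mono e); auto].
  apply chain_one. apply chain_one in C1.
  pose proof (dist_triangle (f w) (f y) c). lra.
Qed.

(* [chain_equiv x0 y]: for every e there are e-chains of positive length from x0
   to y and back; this is the chain recurrent class of x0 (Lemma
   [chain_recurrent_class_iff]), without the periodicity bookkeeping. *)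
Definition chain_equiv (x0 y : X) : Prop := forall e, 0 < e ->
  (exists L, (1 <= L)%nat /\ chain e x0 y L) /\ (exists L, (1 <= L)%nat /\ chain e y x0 L).

Lemma chain_segment e (p : nat -> X) : (forall k, d (f (p k)) (p (S k)) < e) ->
  forall a b, (a <= b)%nat -> chain e (p a) (p b) (b - a).
Proof.
  intros Hs a b Hab. exists (fun k => p (a + k)%nat). repeat split.
  - f_equal. lia.
  - f_equal. lia.
  - intros k _. replace (a + S k)%nat with (S (a + k)) by lia. apply Hs.
Qed.

Lemma periodic_of_closed_chain e (p : nat -> X) m : (1 <= m)%nat -> p m = p 0%nat ->
  (forall k, (k < m)%nat -> d (f (p k)) (p (S k)) < e) ->
  (forall k, p ((k + m) mod m)%nat = p (k mod m)%nat) /\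
  (forall k, d (f (p (k mod m)%nat)) (p ((S k) mod m)%nat) < e).
Proof.
  intros Hm Hper Ps. split.
  - intros k. replace (k + m)%nat with (k + 1 * m)%nat by lia.
    rewrite Nat.Div0.mod_add. auto.
  - intros k. pose proof (Nat.mod_upper_bound k m ltac:(lia)) as Hr.
    pose proof (Nat.div_mod_eq k m) as Ek.
    destruct (Nat.eq_dec (S (k mod m)) m) as [E|E].
    + assert (Hz : (S k mod m = 0)%nat).
      { symmetry. apply (Nat.mod_unique _ _ (S (k / m))); lia. }
      rewrite Hz, <- Hper. pose proof (Ps (k mod m)%nat Hr) as Hlast.
      rewrite E in Hlast. exact Hlast.
    + assert (Hz : (S k mod m = S (k mod m))%nat).
      { symmetry. apply (Nat.mod_unique _ _ (k / m)); lia. }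
      rewrite Hz. apply Ps. lia.
Qed.

(* Cutting a periodic pseudo orbit through x0 and y gives the two chains, and
   conversely gluing the two chains and unrolling gives a periodic pseudo orbit. *)
Lemma chain_recurrent_class_iff x0 y : chain_recurrent_class d f x0 y <-> chain_equiv x0 y.
Proof.
  split.
  - intros H e He.
    destruct (H e He) as [m [p [Hm1 [Hper [Hstep [[i Hi] [j Hj]]]]]]].
    assert (Hpm : forall t k, p (k + t * m)%nat = p k).
    { induction t as [|t IH]; intros k; [f_equal; lia|].
      replace (k + S t * m)%nat with ((k + t * m) + m)%nat by lia. rewrite Hper. auto. }
    split.
    + exists (j + S i * m - i)%nat. split; [nia|].
      rewrite <- Hi, <- Hj, <- (Hpm (S i) j). apply chain_segment; auto. nia.
    + exists (i + S j * m - j)%nat. split; [nia|].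
      rewrite <- Hi, <- Hj, <- (Hpm (S j) i). apply chain_segment; auto. nia.
  - intros H e He. destruct (H e He) as [[L1 [HL1 C1]] [L2 [HL2 C2]]].
    destruct (chain_concat_path _ _ _ _ _ _ C1 C2) as [p [P0 [PL [PM Ps]]]].
    destruct (periodic_of_closed_chain e p (L1 + L2) ltac:(lia) ltac:(congruence) Ps)
      as [Hper Hstep].
    exists (L1 + L2)%nat, (fun k => p (k mod (L1 + L2))%nat). repeat split; auto; [lia| |].
    + exists 0%nat. rewrite Nat.Div0.mod_0_l. auto.
    + exists L1. rewrite Nat.mod_small by lia. auto.
Qed.

(* Chains of length at least 2 exist as well, by going around once more. *)
Lemma chain_equiv_long x0 y : chain_equiv x0 y -> forall e, 0 < e ->
  (exists L, (2 <= L)%nat /\ chain e x0 y L) /\ (exists L, (2 <= L)%nat /\ chain e y x0 L).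
Proof.
  intros H e He. destruct (H e He) as [[L1 [H1 C1]] [L2 [H2 C2]]]. split.
  - exists (L1 + (L2 + L1))%nat. split; [lia|].
    apply (chain_app _ _ _ _ _ _ C1), (chain_app _ _ _ _ _ _ C2 C1).
  - exists (L2 + (L1 + L2))%nat. split; [lia|].
    apply (chain_app _ _ _ _ _ _ C2), (chain_app _ _ _ _ _ _ C1 C2).
Qed.

Lemma chain_equiv_self x0 y : chain_equiv x0 y -> chain_equiv x0 x0.
Proof.
  intros H e He. destruct (H e He) as [[L1 [H1 C1]] [L2 [H2 C2]]].
  split; exists (L1 + L2)%nat; split; try lia; eapply chain_app; eauto.
Qed.

(* The class is invariant under f and g; a jump at the start (resp. end) of a
   chain absorbs the move, using continuity of f (resp. g). *)
Lemma chain_equiv_f x0 y : chain_equiv x0 y -> chain_equiv x0 (f y).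
Proof.
  intros H e He.
  destruct (f_continuous (f y) (e/2) ltac:(lra)) as [dl [Hdl Hcont]].
  pose proof (Rmin_l (e/2) dl) as Heta1. pose proof (Rmin_r (e/2) dl) as Heta2.
  set (eta := Rmin (e/2) dl) in *.
  assert (Heta : 0 < eta) by (apply Rmin_pos; lra).
  destruct (chain_equiv_long _ _ H eta Heta) as [[L1 [H1 C1]] [L2 [H2 C2]]]. split.
  - exists (L1 + 1)%nat. split; [lia|]. apply chain_app with y.
    + apply (chain_mono eta); auto. lra.
    + apply chain_one. rewrite dist_self. auto.
  - (* skip the first point c of the chain y -> x0: f (f y) is close to f c *)
    replace L2 with (1 + (L2 - 1))%nat in C2 by lia.
    destruct (chain_split _ _ _ _ _ C2) as [c [Cc Crest]]. apply chain_one in Cc.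
    exists (L2 - 1)%nat. split; [lia|].
    apply (chain_perturb_start eta e c); auto; [lia | lra|].
    assert (d (f (f y)) (f c) < e/2) by (apply Hcont; lra). lra.
Qed.

Lemma chain_equiv_g x0 y : chain_equiv x0 y -> chain_equiv x0 (g y).
Proof.
  intros H e He.
  destruct (g_continuous y (e/2) ltac:(lra)) as [dl [Hdl Hcont]].
  pose proof (Rmin_l (e/2) dl) as Heta1. pose proof (Rmin_r (e/2) dl) as Heta2.
  set (eta := Rmin (e/2) dl) in *.
  assert (Heta : 0 < eta) by (apply Rmin_pos; lra).
  destruct (chain_equiv_long _ _ H eta Heta) as [[L1 [H1 C1]] [L2 [H2 C2]]]. split.
  - (* stop at the last point c before y: c = g (f c) is close to g y *)
    replace L1 with ((L1 - 1) + 1)%nat in C1 by lia.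
    destruct (chain_split _ _ _ _ _ C1) as [c [Crest Cc]]. apply chain_one in Cc.
    exists (L1 - 1)%nat. split; [lia|].
    apply (chain_perturb_end eta e x0 c); auto; [lia | lra|].
    rewrite <- (g_f c), dist_sym.
    assert (d (g y) (g (f c)) < e/2) by (apply Hcont; rewrite dist_sym; lra). lra.
  - exists (1 + L2)%nat. split; [lia|]. apply chain_app with y.
    + apply chain_one. rewrite f_g, dist_self. auto.
    + apply (chain_mono eta); auto. lra.
Qed.

Lemma chain_equiv_iter_f x0 y k : chain_equiv x0 y -> chain_equiv x0 (Nat.iter k f y).
Proof. intros H. induction k; simpl; auto. apply chain_equiv_f. auto. Qed.

Lemma chain_equiv_iter_g x0 y k : chain_equiv x0 y -> chain_equiv x0 (Nat.iter k g y).
Proof. intros H. induction k; simpl; auto. apply chain_equiv_g. auto. Qed.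

Lemma chain_equiv_zpow x0 y k : chain_equiv x0 y -> chain_equiv x0 (zpow f g k y).
Proof.
  intros H. destruct (Z_nat_cases k) as [m [-> | ->]].
  - rewrite zpow_of_nat. apply chain_equiv_iter_f. auto.
  - rewrite zpow_opp_of_nat. apply chain_equiv_iter_g. auto.
Qed.

Lemma chain_equiv_closed x0 z :
  (forall r, 0 < r -> exists y, chain_equiv x0 y /\ d z y < r) -> chain_equiv x0 z.
Proof.
  intros H e He.
  destruct (f_continuous z (e/2) ltac:(lra)) as [dl [Hdl Hcont]].
  destruct (H (Rmin (e/2) dl)) as [y [Hy Hzy]]; [apply Rmin_pos; lra|].
  pose proof (Rmin_l (e/2) dl) as Heta1. pose proof (Rmin_r (e/2) dl) as Heta2.
  destruct (Hy (e/2) ltac:(lra)) as [[L1 [H1 C1]] [L2 [H2 C2]]]. split.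
  - exists L1. split; auto. apply (chain_perturb_end (e/2) e x0 y); auto; [lra|].
    rewrite dist_sym. lra.
  - exists L2. split; auto. apply (chain_perturb_start (e/2) e y); auto; [lra|].
    assert (d (f z) (f y) < e/2) by (apply Hcont; lra). lra.
Qed.

Definition step_error (xs : Z -> X) (t : Z) : R := d (f (xs t)) (xs (t + 1)%Z).

(* A point whose orbit is asymptotic to a limit pseudo orbit lying eventually in
   the class belongs to the class: far in the past and in the future, its orbit
   is joined to the class by single small jumps. *)
Lemma chain_equiv_asymptotic x0 z (xs : Z -> X) (K : Z) :
  (forall k, (K <= Z.abs k)%Z -> chain_equiv x0 (xs k)) ->
  tends0_Z (step_error xs) ->
  tends0_Z (fun k => d (zpow f g k z) (xs k)) ->
  chain_equiv x0 z.
Proof.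
  intros HC Herr Hz e He.
  destruct (Herr (e/4) ltac:(lra)) as [N1 HN1].
  destruct (Hz (e/4) ltac:(lra)) as [N2 HN2].
  set (j := Z.to_nat (Z.max K (Z.max N1 N2))).
  unfold step_error in HN1. split.
  - (* x0 ~> xs (-j-2), jump to g^(j+1) z, then follow the orbit to z *)
    set (k := (- Z.of_nat (S (S j)))%Z).
    assert (Ek : (k + 1)%Z = (- Z.of_nat (S j))%Z) by (unfold k; lia).
    destruct (HC k ltac:(unfold k, j; lia) e He) as [[L1 [HL1 C1]] _].
    exists (L1 + 1 + S j)%nat. split; [lia|].
    apply chain_app with (Nat.iter (S j) g z).
    + apply chain_app with (xs k); auto. apply chain_one.
      pose proof (HN1 k ltac:(unfold k, j; lia)) as A1.
      pose proof (HN2 (k + 1)%Z ltac:(rewrite Ek; unfold j; lia)) as A2.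
      cbv beta in A1, A2. rewrite abs_dist in A1, A2. rewrite Ek in A1, A2.
      rewrite zpow_opp_of_nat, dist_sym in A2.
      pose proof (dist_triangle (f (xs k)) (xs (- Z.of_nat (S j))%Z) (Nat.iter (S j) g z)).
      lra.
    + pattern z at 2. rewrite <- (iter_f_g (S j) z). apply chain_orbit. auto.
  - (* follow the orbit of z to f^(j+1) z, jump to xs (j+1), then ~> x0 *)
    set (k := Z.of_nat (S j)).
    destruct (HC k ltac:(unfold k, j; lia) e He) as [_ [L1 [HL1 C1]]].
    exists (j + 1 + L1)%nat. split; [lia|].
    apply chain_app with (xs k); auto.
    apply chain_app with (Nat.iter j f z); [apply chain_orbit; auto|].
    apply chain_one. pose proof (HN2 k ltac:(unfold k, j; lia)) as A2. cbv beta in A2.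
    rewrite abs_dist in A2. unfold k in A2 |- *. rewrite zpow_of_nat in A2.
    change (f (Nat.iter j f z)) with (Nat.iter (S j) f z). lra.
Qed.

Lemma closed_compact (K : X -> Prop) : compact_space d ->
  (forall z, (forall r, 0 < r -> exists y, K y /\ d z y < r) -> K z) ->
  compact_set d K.
Proof.
  intros Hc Hclosed I U HU Hcov.
  (* cover the whole space by the U i together with the complement of K *)
  set (U' := fun (o : option I) (x : X) =>
         match o with Some i => U i x | None => ~ K x end).
  destruct (Hc (option I) U') as [l' Hl'].
  - intros [i|]; simpl; [apply HU|].
    intros x Hx. apply NNPP. intros Hn.
    apply Hx, Hclosed. intros r Hr. apply NNPP. intros Hn2. apply Hn.
    exists r. split; auto. intros y Hy Ky. apply Hn2. exists y. auto.
  - intros x _. destruct (classic (K x)) as [Kx|Kx].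
    + destruct (Hcov x Kx) as [i Hi]. exists (Some i). auto.
    + exists None. auto.
  - exists (flat_map (fun o => match o with Some i => i :: nil | None => nil end) l').
    intros x Kx. destruct (Hl' x Logic.I) as [[i|] [Hin Hx]]; [|contradiction].
    exists i. split; auto. apply in_flat_map. exists (Some i). simpl. auto.
Qed.

Lemma compact_uniform_bound (K : X -> Prop) (P : nat -> X -> Prop) :
  compact_set d K ->
  (forall z, K z -> exists a r, 0 < r /\ forall w, d z w < r -> P a w) ->
  exists A, forall y, K y -> exists a, (a <= A)%nat /\ P a y.
Proof.
  intros HK Hloc.
  destruct (HK (X * nat)%type (fun c w => exists r, 0 < r /\ d (fst c) w < r /\
              forall w', d (fst c) w' < r -> P (snd c) w')) as [l Hl].
  - intros [z a] w [r [Hr [Hw HP]]]. simpl in *. exists (r - d z w). split; [lra|].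
    intros w' Hww'. exists r. repeat split; auto.
    pose proof (dist_triangle z w w'). lra.
  - intros z Kz. destruct (Hloc z Kz) as [a [r [Hr HP]]].
    exists (z, a), r. simpl. rewrite dist_self. auto.
  - exists (list_max (map snd l)). intros y Ky.
    destruct (Hl y Ky) as [[z a] [Hin [r [Hr [Hy HP]]]]].
    exists a. split; [|apply HP; auto].
    pose proof (proj1 (list_max_le (map snd l) _) (le_n _)) as Hmax.
    rewrite Forall_forall in Hmax. apply Hmax, in_map_iff. exists (z, a). auto.
Qed.

Lemma splice_chain (c e : R) (ws : Z -> X) (lo hi : Z) :
  (lo <= hi)%Z -> e <= c ->
  chain e (ws lo) (ws hi) (Z.to_nat (hi - lo)) ->
  (forall t, (t < lo \/ hi <= t)%Z -> step_error ws t <= c) ->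
  tends0_Z (step_error ws) ->
  exists xs, (forall t, (t <= lo \/ hi <= t)%Z -> xs t = ws t) /\
    (forall t, step_error xs t <= c) /\ tends0_Z (step_error xs).
Proof.
  intros Hlohi Hec [p [P0 [PL Ps]]] Hout Hws.
  set (xs := fun t => if andb (lo <=? t)%Z (t <=? hi)%Z then p (Z.to_nat (t - lo)) else ws t).
  assert (Hin : forall t, (lo <= t <= hi)%Z -> xs t = p (Z.to_nat (t - lo))).
  { intros t Ht. unfold xs. destruct (Z.leb_spec lo t), (Z.leb_spec t hi); simpl; try reflexivity; lia. }
  assert (Hagree : forall t, (t <= lo \/ hi <= t)%Z -> xs t = ws t).
  { intros t Ht. unfold xs. destruct (Z.leb_spec lo t), (Z.leb_spec t hi); simpl; auto.
    destruct (Z.eq_dec t lo) as [->|Hne].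
    - rewrite Z.sub_diag. auto.
    - replace t with hi by lia. auto. }
  assert (Herr_out : forall t, (t < lo \/ hi <= t)%Z -> step_error xs t = step_error ws t).
  { intros t Ht. unfold step_error. rewrite !Hagree by lia. auto. }
  exists xs. split; [auto|split].
  - intros t. destruct (Z_lt_le_dec t lo); [rewrite Herr_out by lia; auto|].
    destruct (Z_lt_le_dec t hi); [|rewrite Herr_out by lia; auto].
    unfold step_error. rewrite !Hin by lia.
    replace (Z.to_nat (t + 1 - lo)) with (S (Z.to_nat (t - lo))) by lia.
    apply Rlt_le, Rlt_le_trans with e; auto. apply Ps. lia.
  - intros eps Heps. destruct (Hws eps Heps) as [N HN].
    exists (Z.max N (Z.abs lo + Z.abs hi + 1)). intros t Ht.
    rewrite Herr_out by lia. apply HN. lia.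
Qed.

Definition orbit_pair (a b : X) (L : nat) (t : Z) : X :=
  if (t <=? 0)%Z then zpow f g t a else zpow f g (t - Z.of_nat L) b.

Lemma orbit_pair_past a b L t : (t <= 0)%Z -> orbit_pair a b L t = zpow f g t a.
Proof. intros Ht. unfold orbit_pair. destruct (Z.leb_spec t 0); auto. lia. Qed.

Lemma orbit_pair_future a b L t : (1 <= L)%nat -> (Z.of_nat L <= t)%Z ->
  orbit_pair a b L t = zpow f g (t - Z.of_nat L) b.
Proof. intros HL Ht. unfold orbit_pair. destruct (Z.leb_spec t 0); auto. lia. Qed.

Lemma chain_limit_pseudo_orbit e a b L : 0 < e -> (1 <= L)%nat -> chain e a b L ->
  exists xs, (forall t, (t <= 0)%Z -> xs t = zpow f g t a) /\
    (forall t, (Z.of_nat L <= t)%Z -> xs t = zpow f g (t - Z.of_nat L) b) /\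
    (forall t, step_error xs t <= e) /\ tends0_Z (step_error xs).
Proof.
  intros He HL C.
  assert (Hexact : forall t, (t < 0 \/ Z.of_nat L <= t)%Z ->
            step_error (orbit_pair a b L) t = 0).
  { intros t Ht. unfold step_error. destruct Ht as [Ht|Ht].
    - rewrite !orbit_pair_past, f_zpow by lia. apply dist_self.
    - rewrite !orbit_pair_future, f_zpow by lia.
      replace (t - Z.of_nat L + 1)%Z with (t + 1 - Z.of_nat L)%Z by lia. apply dist_self. }
  destruct (splice_chain e e (orbit_pair a b L) 0 (Z.of_nat L)) as [xs [Hagree [Herr Hlim]]].
  - lia.
  - lra.
  - rewrite orbit_pair_past, orbit_pair_future, Z.sub_diag, Z.sub_0_r, Nat2Z.id by lia. exact C.
  - intros t Ht. rewrite Hexact by lia. lra.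
  - intros eps Heps. exists (Z.of_nat L + 1)%Z. intros t Ht.
    rewrite Hexact, Rabs_R0 by lia. lra.
  - exists xs. repeat split; auto.
    + intros t Ht. rewrite Hagree, orbit_pair_past by lia. auto.
    + intros t Ht. rewrite Hagree, orbit_pair_future by lia. auto.
Qed.

Definition spread (n : nat) (ys : Z -> X) (t : Z) : X :=
  Nat.iter (Z.to_nat (t mod Z.of_nat n)) f (ys (t / Z.of_nat n)%Z).

Lemma spread_mul n ys k : (1 <= n)%nat -> spread n ys (Z.of_nat n * k) = ys k.
Proof.
  intros Hn. unfold spread.
  rewrite <- (Z.div_unique_pos (Z.of_nat n * k) (Z.of_nat n) k 0) by lia.
  rewrite <- (Z.mod_unique_pos (Z.of_nat n * k) (Z.of_nat n) k 0) by lia. reflexivity.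
Qed.

Lemma spread_step_error n ys t : (1 <= n)%nat ->
  step_error (spread n ys) t = 0 \/
  step_error (spread n ys) t =
    d (Nat.iter n f (ys (t / Z.of_nat n)%Z)) (ys (t / Z.of_nat n + 1)%Z).
Proof.
  intros Hn. unfold step_error, spread.
  pose proof (Z.div_mod t (Z.of_nat n) ltac:(lia)) as Et.
  pose proof (Z.mod_pos_bound t (Z.of_nat n) ltac:(lia)) as Hr.
  set (q := (t / Z.of_nat n)%Z) in *. set (r := (t mod Z.of_nat n)%Z) in *.
  change (f (Nat.iter (Z.to_nat r) f (ys q))) with (Nat.iter (S (Z.to_nat r)) f (ys q)).
  destruct (Z_lt_le_dec (r + 1) (Z.of_nat n)) as [H|H].
  - left. rewrite <- (Z.div_unique_pos (t + 1) (Z.of_nat n) q (r + 1)) by lia.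
    rewrite <- (Z.mod_unique_pos (t + 1) (Z.of_nat n) q (r + 1)) by lia.
    replace (Z.to_nat (r + 1)) with (S (Z.to_nat r)) by lia. apply dist_self.
  - right. rewrite <- (Z.div_unique_pos (t + 1) (Z.of_nat n) (q + 1) 0) by lia.
    rewrite <- (Z.mod_unique_pos (t + 1) (Z.of_nat n) (q + 1) 0) by lia.
    replace (S (Z.to_nat r)) with n by lia. reflexivity.
Qed.

Lemma div_abs_bound n t K : (1 <= n)%nat -> (0 <= K)%Z ->
  (t < - (Z.of_nat n * K) \/ Z.of_nat n * K <= t)%Z -> (K <= Z.abs (t / Z.of_nat n))%Z.
Proof.
  intros Hn HK Ht.
  pose proof (Z.div_mod t (Z.of_nat n) ltac:(lia)).
  pose proof (Z.mod_pos_bound t (Z.of_nat n) ltac:(lia)). nia.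
Qed.

Lemma spread_tends0 n ys : (1 <= n)%nat ->
  tends0_Z (fun k => d (Nat.iter n f (ys k)) (ys (k + 1)%Z)) ->
  tends0_Z (step_error (spread n ys)).
Proof.
  intros Hn Hys eps Heps. destruct (Hys eps Heps) as [N HN].
  exists (Z.of_nat n * (Z.abs N + 1))%Z. intros t Ht.
  destruct (spread_step_error n ys t Hn) as [-> | ->]; [rewrite Rabs_R0; lra|].
  apply HN. pose proof (div_abs_bound n t (Z.abs N) Hn ltac:(lia) ltac:(nia)). lia.
Qed.

Definition cyclic_decomposition (C : X -> Prop) (n : nat) (Cs : nat -> X -> Prop) : Prop :=
  (1 <= n)%nat /\
  (forall i j, (i < n)%nat -> (j < n)%nat -> i <> j ->
     forall x, Cs i x -> Cs j x -> False) /\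
  (forall i, (i < n)%nat -> compact_set d (Cs i)) /\
  (forall i, (i < n)%nat -> forall x, Cs i x -> C x) /\
  (forall i, (i < n)%nat -> forall y, image (Nat.iter n f) (Cs i) y <-> Cs i y) /\
  (forall x, C x <-> exists i, (i < n)%nat /\ Cs i x) /\
  (forall i, (i < n)%nat -> forall y, image f (Cs i) y <-> Cs ((i + 1) mod n)%nat y) /\
  (forall i, (i < n)%nat ->
     top_mixing_on d (Nat.iter n f) (Cs i) /\
     two_sided_limit_shadowing_on d (Nat.iter n f) (Nat.iter n g) (Cs i)).

Lemma empty_cyclic_decomposition (C : X -> Prop) :
  (forall y, ~ C y) -> cyclic_decomposition C 1 (fun _ _ => False).
Proof.
  intros Hempty.
  assert (Hno_image : forall h y, ~ image h (fun _ : X => False) y) by (intros h y [w [[] _]]).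
  split; [lia|]. split; [intros; contradiction|].
  split; [intros i _ I U _ _; exists nil; intros y []|].
  split; [intros; contradiction|].
  split; [intros i _ y; split; [apply Hno_image | intros []]|].
  split; [intros y; split; [intros Hy; destruct (Hempty y Hy) | intros [i [_ []]]]|].
  split; [intros i _ y; split; [apply Hno_image | intros []]|].
  intros i _. split.
  - intros U V [HUK _] _ [u Hu] _. destruct (HUK u Hu).
  - intros ys Hys _. destruct (Hys 0%Z).
Qed.

(* In this section x0 is chain
   recurrent and d0 is a scale at which d0-limit pseudo orbits are limit
   shadowed (all limit pseudo orbits are, by L-shadowing, at a small enough scale). *)
Section Period.
Variables (x0 : X) (d0 : R).
Hypothesis Hcompact : compact_space d.
Hypothesis Hx0 : chain_equiv x0 x0.
Hypothesis Hd0 : 0 < d0.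
Hypothesis Hlimit_shadow : forall xs : Z -> X,
  (forall k, step_error xs k <= d0) -> tends0_Z (step_error xs) ->
  exists z, tends0_Z (fun k => d (zpow f g k z) (xs k)).

Definition cycle_length (e : R) (m : nat) : Prop := (1 <= m)%nat /\ chain e x0 x0 m.

Lemma cycle_length_period e : 0 < e ->
  exists P, (1 <= P)%nat /\ (forall a, cycle_length e a -> Nat.divide P a) /\
    (exists a b, cycle_length e a /\ cycle_length e b /\ a = (b + P)%nat) /\
    (exists M, forall m, (M <= m)%nat -> Nat.divide P m -> cycle_length e m).
Proof.
  intros He. apply semigroup_period.
  - intros a b [Ha Ca] [Hb Cb]. split; [lia|]. eapply chain_app; eauto.
  - intros a [Ha _]. auto.
  - destruct (Hx0 e He) as [[L [HL CL]] _]. exists L. split; auto.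
Qed.

Lemma shadowed_cycle eta L : 0 < eta -> cycle_length d0 L ->
  exists K, (L <= K)%nat /\
    chain eta (Nat.iter (S K) g x0) (Nat.iter (S K - L) f x0) (S K + S K).
Proof.
  intros Heta [HL C].
  destruct (chain_limit_pseudo_orbit d0 x0 x0 L Hd0 HL C) as [xs [Hpast [Hfut [Herr Hlim]]]].
  destruct (Hlimit_shadow xs Herr Hlim) as [z Hz].
  destruct (Hz (eta/2) ltac:(lra)) as [N HN].
  set (K := (L + Z.to_nat N)%nat). exists K. split; [lia|].
  (* jump onto the orbit of z at time -K, follow it up to time K, and jump off *)
  replace (S K + S K)%nat with (1 + (K + K) + 1)%nat by lia.
  apply chain_app with (zpow f g (Z.of_nat K) z).
  apply chain_app with (zpow f g (- Z.of_nat K) z).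
  - apply chain_one.
    change (f (Nat.iter (S K) g x0)) with (f (g (Nat.iter K g x0))).
    rewrite f_g, <- (zpow_opp_of_nat f g), <- Hpast by lia.
    pose proof (HN (- Z.of_nat K)%Z ltac:(unfold K; lia)) as A. cbv beta in A.
    rewrite abs_dist, dist_sym in A. lra.
  - replace (zpow f g (Z.of_nat K) z) with (Nat.iter (K + K) f (zpow f g (- Z.of_nat K) z))
      by (rewrite iter_zpow; f_equal; lia).
    apply chain_orbit. auto.
  - apply chain_one. rewrite f_zpow.
    replace (Nat.iter (S K - L) f x0) with (xs (Z.of_nat K + 1)%Z).
    + pose proof (HN (Z.of_nat K + 1)%Z ltac:(unfold K; lia)) as A. cbv beta in A.
      rewrite abs_dist in A. lra.
    + rewrite Hfut by lia. rewrite <- (zpow_of_nat f g). f_equal. lia.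
Qed.

(* The period of the eta-cycles divides every d0-cycle length: closing the
   shadowing chain above by eta-chains through x0 produces three eta-cycles
   whose lengths differ by exactly L. *)
Lemma period_scale_invariant eta Q : 0 < eta ->
  (forall a, cycle_length eta a -> Nat.divide Q a) ->
  forall L, cycle_length d0 L -> Nat.divide Q L.
Proof.
  intros Heta HQ L HL.
  destruct (shadowed_cycle eta L Heta HL) as [K [HK Cmid]].
  destruct (chain_equiv_iter_g x0 x0 (S K) Hx0 eta Heta) as [[a [Ha Ca]] _].
  destruct (chain_equiv_iter_f x0 x0 (S K - L) Hx0 eta Heta) as [_ [c [Hc Cc]]].
  assert (D1 : Nat.divide Q (a + S K)).
  { apply HQ. split; [lia|]. apply chain_app with (Nat.iter (S K) g x0); auto.
    pattern x0 at 2. rewrite <- (iter_f_g (S K) x0). apply chain_orbit. auto. }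
  assert (D2 : Nat.divide Q ((S K - L) + c)).
  { apply HQ. split; [lia|]. apply chain_app with (Nat.iter (S K - L) f x0); auto.
    apply chain_orbit. auto. }
  assert (D3 : Nat.divide Q (a + (S K + S K) + c)).
  { apply HQ. split; [lia|]. apply chain_app with (Nat.iter (S K - L) f x0); auto.
    apply chain_app with (Nat.iter (S K) g x0); auto. }
  replace (a + (S K + S K) + c)%nat with (((a + S K) + ((S K - L) + c)) + L)%nat in D3
    by lia.
  exact (Nat.divide_add_cancel_r _ _ _ (Nat.divide_add_r _ _ _ D1 D2) D3).
Qed.

Variable n : nat.
Hypothesis Hn1 : (1 <= n)%nat.
Hypothesis Hn_divides : forall a, cycle_length d0 a -> Nat.divide n a.
Hypothesis Hn_gap : exists a b, cycle_length d0 a /\ cycle_length d0 b /\ a = (b + n)%nat.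

(* At every finer scale the period is still n, so all large multiples of n are
   lengths of eta-cycles. *)
Lemma cycle_lengths_eventually eta : 0 < eta -> eta <= d0 ->
  exists M, forall m, (M <= m)%nat -> Nat.divide n m -> chain eta x0 x0 m.
Proof.
  intros Heta Hle.
  destruct (cycle_length_period eta Heta)
    as [P [HP1 [HPdiv [[a [b [Ha [Hb Eab]]]] [M HM]]]]].
  assert (EP : P = n).
  { apply Nat.divide_antisym.
    - destruct Hn_gap as [a' [b' [Ha' [Hb' E']]]]. replace n with (a' - b')%nat by lia.
      apply Nat.divide_sub_r; apply (period_scale_invariant eta P); auto.
    - replace P with (a - b)%nat by lia.
      apply Nat.divide_sub_r; apply Hn_divides;
        [destruct Ha as [? Ca] | destruct Hb as [? Ca]]; split; auto;
        apply (chain_mono eta); auto. }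
  subst P. exists M. intros m Hm Hdiv. apply HM; auto.
Qed.

Definition piece (i : nat) (y : X) : Prop :=
  chain_equiv x0 y /\ exists L, chain d0 x0 y L /\ (L mod n = i)%nat.

(* Well-definedness: all d0-chains from x0 to a point of the class have the same
   length modulo n, since each closes up to a d0-cycle with a common return. *)
Lemma chain_length_mod y L1 L2 : chain_equiv x0 y ->
  chain d0 x0 y L1 -> chain d0 x0 y L2 -> (L1 mod n = L2 mod n)%nat.
Proof.
  intros Hy C1 C2. destruct (Hy d0 Hd0) as [_ [c [Hc Cc]]].
  apply (mod_eq_of_divide_add n L1 L2 c); [lia| |];
    apply Hn_divides; split; try lia; eapply chain_app; eauto.
Qed.

Lemma piece_class i y : piece i y -> chain_equiv x0 y.
Proof. intros [H _]. auto. Qed.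

Lemma piece_cover y : chain_equiv x0 y -> exists i, (i < n)%nat /\ piece i y.
Proof.
  intros Hy. destruct (Hy d0 Hd0) as [[L [_ CL]] _].
  exists (L mod n)%nat. split; [apply Nat.mod_upper_bound; lia|]. split; eauto.
Qed.

Lemma piece_unique i j y : piece i y -> piece j y -> i = j.
Proof. intros [Hy [L1 [C1 <-]]] [_ [L2 [C2 <-]]]. apply (chain_length_mod y); auto. Qed.

Lemma piece_near i y z : piece i y -> chain_equiv x0 z -> d y z < d0 / 2 -> piece i z.
Proof.
  intros [Hy [L [CL EL]]] Hz Hyz. split; auto.
  destruct (Hy (d0/2) ltac:(lra)) as [[L' [HL' CL']] _].
  exists L'. split.
  - apply (chain_perturb_end (d0/2) d0 x0 y); auto; lra.
  - rewrite <- EL. apply (chain_length_mod y); auto. apply (chain_mono (d0/2)); auto. lra.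
Qed.

Lemma piece_closed i z : (forall r, 0 < r -> exists y, piece i y /\ d z y < r) -> piece i z.
Proof.
  intros H.
  assert (Hz : chain_equiv x0 z).
  { apply chain_equiv_closed. intros r Hr. destruct (H r Hr) as [y [[Hy _] Hzy]]. eauto. }
  destruct (H (d0/2) ltac:(lra)) as [y [Hy Hzy]].
  apply (piece_near i y); auto. rewrite dist_sym. auto.
Qed.

Lemma piece_compact i : compact_set d (piece i).
Proof. apply closed_compact; auto. apply piece_closed. Qed.

Lemma class_compact : compact_set d (chain_equiv x0).
Proof. apply closed_compact; auto. apply chain_equiv_closed. Qed.

Lemma piece_f i y : piece i y -> piece ((i + 1) mod n) (f y).
Proof.
  intros [Hy [L [CL <-]]]. split; [apply chain_equiv_f; auto|].
  exists (L + 1)%nat. split; [|symmetry; apply Nat.Div0.add_mod_idemp_l].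
  apply chain_app with y; auto. apply chain_one. rewrite dist_self. auto.
Qed.

Lemma piece_g i z : (i < n)%nat -> piece ((i + 1) mod n) z -> piece i (g z).
Proof.
  intros Hi Hz.
  destruct (piece_cover (g z)) as [j [Hj Cj]]; [apply chain_equiv_g, (piece_class _ _ Hz)|].
  assert (E : ((j + 1) mod n = (i + 1) mod n)%nat).
  { apply (piece_unique _ _ z); auto. pose proof (piece_f _ _ Cj) as H. rewrite f_g in H. auto. }
  apply mod_succ_inj in E; auto. subst. auto.
Qed.

Lemma piece_iter_n i y : piece i y -> piece i (Nat.iter n f y).
Proof.
  intros [Hy [L [CL <-]]]. split; [apply chain_equiv_iter_f; auto|].
  exists (L + n)%nat. split; [apply chain_app with y; auto; apply chain_orbit; auto|].
  replace (L + n)%nat with (L + 1 * n)%nat by lia. apply Nat.Div0.mod_add.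
Qed.

Lemma piece_iter_back i k z : chain_equiv x0 z -> piece i (Nat.iter (n * k) f z) -> piece i z.
Proof.
  intros Hz [Hw [L [CL EL]]]. split; auto.
  destruct (Hz d0 Hd0) as [[L' [_ CL']] _]. exists L'. split; auto.
  rewrite <- EL, <- (Nat.Div0.mod_add L' k n).
  apply (chain_length_mod (Nat.iter (n * k) f z)); auto.
  replace (L' + k * n)%nat with (L' + n * k)%nat by lia.
  apply chain_app with z; auto. apply chain_orbit. auto.
Qed.

Lemma piece_iter_n_inv i z : piece i z -> piece i (Nat.iter n g z).
Proof.
  intros Hz. apply (piece_iter_back i 1); [apply chain_equiv_iter_g, (piece_class _ _ Hz)|].
  rewrite Nat.mul_1_r, iter_f_g. auto.
Qed.

Lemma return_length_divides i u v a b : piece i u -> piece i v -> (1 <= a)%nat ->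
  chain d0 u x0 a -> chain d0 x0 v b -> Nat.divide n (a + b).
Proof.
  intros [Hu [Lu [Cu Eu]]] [Hv [Lv [Cv Ev]]] Ha Ca Cb.
  assert (D : Nat.divide n (Lu + a)).
  { apply Hn_divides. split; [lia|]. eapply chain_app; eauto. }
  assert (Eb : (b mod n = Lv mod n)%nat) by (apply (chain_length_mod v); auto).
  apply Nat.Lcm0.mod_divide. apply Nat.Lcm0.mod_divide in D.
  rewrite <- Nat.Div0.add_mod_idemp_r, Eb, Ev, <- Eu, Nat.Div0.add_mod_idemp_r, Nat.add_comm.
  auto.
Qed.

(* By compactness of the class, the lengths of eta-chains to and from x0 can be
   bounded uniformly over the class. *)
Lemma return_bounds eta : 0 < eta -> exists A, forall y, chain_equiv x0 y ->
  (exists a, (1 <= a <= A)%nat /\ chain eta y x0 a) /\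
  (exists b, (b <= A)%nat /\ chain eta x0 y b).
Proof.
  intros He.
  destruct (compact_uniform_bound (chain_equiv x0)
              (fun a w => (1 <= a)%nat /\ chain eta w x0 a) class_compact) as [A1 HA1].
  { (* the first jump of a chain z -> x0 also works from every w near z *)
    intros z Hz. destruct (Hz eta He) as [_ [a [Ha Ca]]].
    replace a with (1 + (a - 1))%nat in Ca by lia.
    destruct (chain_split _ _ _ _ _ Ca) as [c [Cc Crest]]. apply chain_one in Cc.
    destruct (f_continuous z (eta - d (f z) c) ltac:(lra)) as [r [Hr Hcont]].
    exists (1 + (a - 1))%nat, r. split; auto. intros w Hw. split; [lia|].
    apply chain_app with c; auto. apply chain_one.
    specialize (Hcont w Hw). rewrite dist_sym in Hcont.
    pose proof (dist_triangle (f w) (f z) c). lra. }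
  destruct (compact_uniform_bound (chain_equiv x0) (fun b w => chain eta x0 w b)
              class_compact) as [A2 HA2].
  { (* the last jump of a chain x0 -> z also lands near every w near z *)
    intros z Hz. destruct (Hz eta He) as [[b [Hb Cb]] _].
    replace b with ((b - 1) + 1)%nat in Cb by lia.
    destruct (chain_split _ _ _ _ _ Cb) as [c [Crest Cc]]. apply chain_one in Cc.
    exists ((b - 1) + 1)%nat, (eta - d (f c) z). split; [lra|]. intros w Hw.
    apply chain_app with c; auto. apply chain_one.
    pose proof (dist_triangle (f c) z w). lra. }
  exists (A1 + A2)%nat. intros y Hy. split.
  - destruct (HA1 y Hy) as [a [Ha [Ha1 Ca]]]. exists a. split; auto. lia.
  - destruct (HA2 y Hy) as [b [Hb Cb]]. exists b. split; auto. lia.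
Qed.

Lemma piece_bridge eta : 0 < eta -> eta <= d0 ->
  exists B, forall i u v k, piece i u -> piece i v -> (B <= k)%nat -> chain eta u v (n * k).
Proof.
  intros Heta Hle.
  destruct (return_bounds eta Heta) as [A HA].
  destruct (cycle_lengths_eventually eta Heta Hle) as [M HM].
  exists (A + A + M)%nat. intros i u v k Hu Hv Hk.
  destruct (HA u (piece_class _ _ Hu)) as [[a [Ha Ca]] _].
  destruct (HA v (piece_class _ _ Hv)) as [_ [b [Hb Cb]]].
  assert (Dab : Nat.divide n (a + b)).
  { apply (return_length_divides i u v); auto; [lia| |]; apply (chain_mono eta); auto. }
  (* go from u to x0, cycle at x0, and go from x0 to v *)
  replace (n * k)%nat with (a + (n * k - (a + b)) + b)%nat by nia.
  apply chain_app with x0; auto. apply chain_app with x0; auto.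
  apply HM; [nia|]. apply Nat.divide_sub_r; auto. exists k. lia.
Qed.

(* Mixing: a long eta-chain from u to v, shadowed by an orbit, yields a point
   near u (hence in U) whose f^(n*k)-image is near v (hence in V). *)
Lemma piece_mixing i : L_shadowing d f g -> top_mixing_on d (Nat.iter n f) (piece i).
Proof.
  intros Hshadow U V [HUK HUo] [HVK HVo] [u Hu] [v Hv].
  destruct (HUo u Hu) as [eu [Heu HUb]]. destruct (HVo v Hv) as [ev [Hev HVb]].
  set (eps := Rmin (Rmin eu ev) (d0/2) / 2).
  assert (Heps : 0 < eps /\ eps < eu /\ eps < ev /\ eps < d0/2).
  { unfold eps. pose proof (Rmin_l (Rmin eu ev) (d0/2)). pose proof (Rmin_r (Rmin eu ev) (d0/2)).
    pose proof (Rmin_l eu ev). pose proof (Rmin_r eu ev).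
    assert (0 < Rmin (Rmin eu ev) (d0/2)) by (repeat apply Rmin_pos; lra). lra. }
  destruct (Hshadow eps ltac:(lra)) as [delta [Hdelta Hsh]].
  pose proof (Rmin_l delta d0) as Heta1. pose proof (Rmin_r delta d0) as Heta2.
  set (eta := Rmin delta d0) in *.
  assert (Heta : 0 < eta) by (apply Rmin_pos; lra).
  destruct (piece_bridge eta Heta Heta2) as [B HB].
  exists (S B). intros k Hk.
  assert (Cuv : chain eta u v (n * k)) by (apply (HB i); auto; lia).
  destruct (chain_limit_pseudo_orbit eta u v (n * k) Heta ltac:(nia) Cuv)
    as [xs [Hpast [Hfut [Herr Hlim]]]].
  destruct (Hsh xs) as [z [Hclose Hasym]]; [|exact Hlim|].
  { intros t. specialize (Herr t). unfold step_error in Herr. lra. }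
  assert (Hz : chain_equiv x0 z).
  { apply (chain_equiv_asymptotic x0 z xs (Z.of_nat (n * k))); auto.
    intros t Ht. destruct (Z_lt_le_dec t 0).
    - rewrite Hpast by lia. apply chain_equiv_zpow, (piece_class i). auto.
    - rewrite Hfut by lia. apply chain_equiv_zpow, (piece_class i). auto. }
  pose proof (Hclose 0%Z) as Hz0. rewrite Hpast in Hz0 by lia. simpl in Hz0.
  pose proof (Hclose (Z.of_nat (n * k))) as Hzk.
  rewrite Hfut, Z.sub_diag, zpow_of_nat in Hzk by lia. simpl in Hzk.
  exists z. split.
  - apply HUb; [apply (piece_near i u z)|]; auto; rewrite dist_sym; lra.
  - rewrite iter_iter. apply HVb; [apply (piece_near i v)|]; auto;
      [apply chain_equiv_iter_f; auto| |]; rewrite dist_sym; lra.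
Qed.

(* An f^n-limit pseudo orbit ys in a piece, spread into a sequence for f and
   corrected around time 0 by a d0-chain, becomes a d0-limit pseudo orbit xs of
   f which reads ys at the times n*k with |k| large and lies in the class far out. *)
Lemma piece_spread_pseudo_orbit i ys : (forall k, piece i (ys k)) ->
  tends0_Z (fun k => d (Nat.iter n f (ys k)) (ys (k + 1)%Z)) ->
  exists (xs : Z -> X) (N : Z), (0 <= N)%Z /\
    (forall t, step_error xs t <= d0) /\ tends0_Z (step_error xs) /\
    (forall k, (N <= Z.abs k)%Z -> xs (Z.of_nat n * k)%Z = ys k) /\
    (forall t, (Z.of_nat n * N <= Z.abs t)%Z -> chain_equiv x0 (xs t)).
Proof.
  intros Hys Hlim.
  destruct (Hlim d0 Hd0) as [N1 HN1].
  destruct (piece_bridge d0 Hd0 (Rle_refl _)) as [B HB].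
  set (N := (Z.to_nat N1 + B)%nat).
  assert (Hws : forall k, spread n ys (Z.of_nat n * k) = ys k) by (intro; apply spread_mul; auto).
  destruct (splice_chain d0 d0 (spread n ys) (- (Z.of_nat n * Z.of_nat N))
              (Z.of_nat n * Z.of_nat N)) as [xs [Hagree [Herr Hxlim]]].
  - nia.
  - lra.
  - replace (- (Z.of_nat n * Z.of_nat N))%Z with (Z.of_nat n * - Z.of_nat N)%Z by lia.
    rewrite !Hws.
    replace (Z.to_nat (Z.of_nat n * Z.of_nat N - Z.of_nat n * - Z.of_nat N))
      with (n * (N + N))%nat by lia.
    apply (HB i); auto. lia.
  - (* outside the window, the errors are errors of ys at indices beyond N1 *)
    intros t Ht. destruct (spread_step_error n ys t Hn1) as [E|E]; rewrite E; [lra|].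
    pose proof (div_abs_bound n t (Z.of_nat N) Hn1 ltac:(lia) ltac:(lia)).
    specialize (HN1 (t / Z.of_nat n)%Z ltac:(unfold N in *; lia)).
    rewrite abs_dist in HN1. exact HN1.
  - apply spread_tends0; auto.
  - exists xs, (Z.of_nat N). split; [lia|]. split; [auto|]. split; [auto|]. split.
    + intros k Hk. rewrite Hagree by nia. apply Hws.
    + intros t Ht. rewrite Hagree by lia. unfold spread.
      apply chain_equiv_iter_f, (piece_class i). auto.
Qed.

(* Limit shadowing for f^n on a piece: shadow the spread pseudo orbit by an
   orbit of f; the shadowing point lies in the class, and in the piece i because
   its far iterates f^(n*k) z are close to ys k. *)
Lemma piece_limit_shadowing i :
  two_sided_limit_shadowing_on d (Nat.iter n f) (Nat.iter n g) (piece i).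
Proof.
  intros ys Hys Hlim.
  destruct (piece_spread_pseudo_orbit i ys Hys Hlim)
    as [xs [N [HN [Herr [Hxlim [Hxs Hxclass]]]]]].
  destruct (Hlimit_shadow xs Herr Hxlim) as [z Hz].
  assert (Hasym : tends0_Z (fun k => d (zpow (Nat.iter n f) (Nat.iter n g) k z) (ys k))).
  { intros eps Heps. destruct (Hz eps Heps) as [N3 HN3].
    exists (N + Z.abs N3)%Z. intros k Hk.
    rewrite zpow_iter, <- Hxs by lia. apply HN3. nia. }
  exists z. split; [|exact Hasym].
  destruct (Hasym (d0/4) ltac:(lra)) as [K HK].
  set (k := Z.to_nat (Z.abs K)).
  specialize (HK (Z.of_nat k) ltac:(unfold k; lia)). cbv beta in HK.
  rewrite zpow_iter, <- Nat2Z.inj_mul, zpow_of_nat, abs_dist in HK.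
  assert (Hzc : chain_equiv x0 z) by (apply (chain_equiv_asymptotic x0 z xs _ Hxclass); auto).
  apply (piece_iter_back i k z Hzc).
  apply (piece_near i (ys (Z.of_nat k))); auto; [apply chain_equiv_iter_f; auto|].
  rewrite dist_sym. lra.
Qed.

Lemma class_cyclic_decomposition (C : X -> Prop) : L_shadowing d f g ->
  (forall y, C y <-> chain_equiv x0 y) -> cyclic_decomposition C n piece.
Proof.
  intros Hshadow HC.
  split; [auto|]. split.
  { intros i j _ _ Hij y Hi Hj. apply Hij. apply (piece_unique i j y); auto. }
  split; [intros i _; apply piece_compact|].
  split; [intros i _ y Hy; apply HC, (piece_class i); auto|].
  split.
  { intros i _ y. split.
    - intros [w [Hw <-]]. apply piece_iter_n. auto.
    - intros Hy. exists (Nat.iter n g y). split; [apply piece_iter_n_inv; auto|apply iter_f_g]. }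
  split.
  { intros y. split.
    - intros Hy. apply piece_cover, HC. auto.
    - intros [i [_ Hi]]. apply HC, (piece_class i). auto. }
  split.
  { intros i Hi y. split.
    - intros [w [Hw <-]]. apply piece_f. auto.
    - intros Hy. exists (g y). split; [apply piece_g; auto|apply f_g]. }
  intros i _. split; [apply piece_mixing; auto|apply piece_limit_shadowing].
Qed.

End Period.
End Dynamics.

Theorem theoremE (X : Type) (d : X -> X -> R) (f g : X -> X) (C : X -> Prop) :
  is_metric d -> compact_space d -> homeomorphism d f g ->
  L_shadowing d f g ->
  (exists x, forall y, C y <-> chain_recurrent_class d f x y) ->
  exists (n : nat) (Cs : nat -> X -> Prop),
    (1 <= n)%nat /\
    (forall i j, (i < n)%nat -> (j < n)%nat -> i <> j ->
       forall x, Cs i x -> Cs j x -> False) /\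
    (forall i, (i < n)%nat -> compact_set d (Cs i)) /\
    (forall i, (i < n)%nat -> forall x, Cs i x -> C x) /\
    (forall i, (i < n)%nat -> forall y, image (Nat.iter n f) (Cs i) y <-> Cs i y) /\
    (forall x, C x <-> exists i, (i < n)%nat /\ Cs i x) /\
    (forall i, (i < n)%nat -> forall y, image f (Cs i) y <-> Cs ((i + 1) mod n)%nat y) /\
    (forall i, (i < n)%nat ->
       top_mixing_on d (Nat.iter n f) (Cs i) /\
       two_sided_limit_shadowing_on d (Nat.iter n f) (Nat.iter n g) (Cs i)).
Proof.
  intros Hmetric Hcompact Hhomeo Hshadow [x Hx].
  assert (HC : forall y, C y <-> chain_equiv d f x y).
  { intros y. rewrite Hx. apply chain_recurrent_class_iff. }
  enough (H : exists n Cs, cyclic_decomposition d f g C n Cs)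
    by (destruct H as [n [Cs H]]; exists n, Cs; exact H).
  destruct (classic (chain_equiv d f x x)) as [Hxx | Hxx].
  - (* d0: a scale at which pseudo orbits are limit shadowed *)
    destruct (Hshadow 1 Rlt_0_1) as [d0 [Hd0 Hsh]].
    (* n: the period of the d0-cycles through x *)
    destruct (cycle_length_period d f x Hxx d0 Hd0) as [n [Hn1 [Hn_divides [Hn_gap _]]]].
    exists n, (piece d f x d0 n).
    apply class_cyclic_decomposition; auto.
    intros xs Herr Hlim. destruct (Hsh xs Herr Hlim) as [z [_ Hz]]. eauto.
  - (* otherwise the class is empty *)
    exists 1%nat, (fun _ _ => False). apply empty_cyclic_decomposition.
    intros y Hy. apply Hxx, (chain_equiv_self d f x y), HC. auto.
Qed.
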